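(* Let $H=(V,\mathcal E)$ be a finite hypergraph and let $\mathcal L=\{L_v\}_{v\in V}$ be a family of sets of positive integers such that $|L_v|\ge\min(\deg_H(v)+1,\,s(H))$ for every $v\in V$. Then $H$ admits a unique-maximum coloring from $\mathcal L$.
   Context: A hypergraph $H=(V,\mathcal E)$ has finite vertex set and a set $\mathcal E$ of nonempty subsets of $V$. $\deg_H(v)$ is the number of hyperedges containing $v$. $s(H)$ is the minimum positive integer $s$ with $|\mathcal E|\le s(s-1)/2$. A coloring $C\colon V\to\mathbb Z_{>0}$ is unique-maximum if in every hyperedge the maximum color is attained by exactly one vertex; $H$ admits such a coloring from $\mathcal L$ if moreover $C(v)\in L_v$ for all $v$. *)

From mathcomp Require Import all_boot.
Set Implicit Arguments. Unset Strict Implicit. Unset Printing Implicit Defensive.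

Definition hypergraph (V : finType) (E : {set {set V}}) : Prop :=
  forall e, e \in E -> e != set0.

Definition hdeg (V : finType) (E : {set {set V}}) (v : V) : nat :=
  #|[set e in E | v \in e]|.

(* s(m) = minimum positive integer s with m <= s(s-1)/2.
   We search k = s-1 over 0..m+1 (k = m+1 always works). *)
Definition s_of (m : nat) : nat :=
  (find (fun k => m <= (k.+1 * k) %/ 2) (iota 0 m.+2)).+1.

Definition sH (V : finType) (E : {set {set V}}) : nat := s_of #|E|.

Definition card_ge (A : nat -> Prop) (k : nat) : Prop :=
  exists s : seq nat, uniq s /\ size s = k /\ (forall x, x \in s -> A x).

Definition unique_max (V : finType) (E : {set {set V}}) (C : V -> nat) : Prop :=
  forall e, e \in E ->
    exists v, [/\ v \in e, forall w, w \in e -> C w <= C v &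
                 forall w, w \in e -> C w = C v -> w = v].

From mathcomp Require Import all_boot zify.
Set Implicit Arguments. Unset Strict Implicit. Unset Printing Implicit Defensive.

(* Induction on the set U of vertices still to be coloured.  If some vertex v
   has deg(v) < s(H), colour H with v deleted from every edge; the deg(v)
   edges through v forbid at most deg(v) colours for v (the maxima of their
   remaining parts), and a colour of L_v avoiding them all gives every edge
   through v a unique maximum.  Otherwise every vertex has deg >= s(H): give
   the largest colour M of all lists to a vertex v whose list contains it,
   and delete v with all its edges and M from all lists.  Since
   |E| - s(H) <= (s(H)-1)(s(H)-2)/2, the parameter s drops by one, exactly
   compensating for the lists losing at most one colour. *)

Lemma s_of_has m : has (fun k => m <= (k.+1 * k) %/ 2) (iota 0 m.+2).
Proof.
apply/hasP; exists m.+1; first by rewrite mem_iota add0n ltnSn.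
by rewrite /= leq_divRL // [m.+2 * _]mulnC leq_mul.
Qed.

Lemma s_of_spec m : m <= (s_of m * (s_of m).-1) %/ 2.
Proof.
have m_has := s_of_has m; have := nth_find 0 m_has.
move: m_has; rewrite has_find size_iota => find_lt.
by rewrite /s_of nth_iota // add0n -pred_Sn.
Qed.

Lemma s_of_min m k : m <= (k.+1 * k) %/ 2 -> s_of m <= k.+1.
Proof.
move=> mk; rewrite /s_of ltnS leqNgt; apply/negP => k_lt.
have := s_of_has m; rewrite has_find size_iota => find_lt.
have := before_find 0 k_lt.
by rewrite nth_iota ?add0n ?mk // (ltn_trans k_lt find_lt).
Qed.

Lemma s_of_mono m m' : m <= m' -> s_of m <= s_of m'.
Proof.
move=> le_mm'; have := s_of_spec m'; rewrite [s_of m']/s_of -pred_Sn.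
by move=> spec_m'; apply/s_of_min/(leq_trans le_mm').
Qed.

Lemma s_of_subn m d : 0 < m -> s_of m <= d -> s_of (m - d) < s_of m.
Proof.
move=> m_gt0; have := s_of_spec m; case: (s_of m) => [|[|k]] spec_m le_d; try lia.
by rewrite ltnS; apply: s_of_min; lia.
Qed.

Lemma size_rem_geq (T : eqType) (x : T) (s : seq T) : (size s).-1 <= size (rem x s).
Proof. by case: (boolP (x \in s)) => [/size_rem-> | /rem_id->]; rewrite ?leq_pred. Qed.

Lemma exists_notin_uniq (T : eqType) (s t : seq T) :
  uniq s -> size t < size s -> exists2 x, x \in s & x \notin t.
Proof.
move=> s_uniq lt_ts; apply/hasP; rewrite has_predC; apply: contraTN lt_ts.
by move/allP/(uniq_leq_size s_uniq); rewrite leqNgt.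
Qed.

Lemma bigmax_seq_mem (s : seq nat) : s != [::] -> \max_(x <- s) x \in s.
Proof.
elim: s => // a s IH _; rewrite big_cons inE.
have [-> | s_nil] := eqVneq s [::]; first by rewrite big_nil maxn0 eqxx.
by rewrite /maxn; case: ltnP => _; rewrite ?eqxx ?IH ?orbT.
Qed.

Section UniqueMaximum.

Variable V : finType.
Implicit Types (E : {set {set V}}) (e U : {set V}) (C : V -> nat).

Definition max_at e C u :=
  [/\ u \in e, forall w, w \in e -> C w <= C u & forall w, w \in e -> C w = C u -> w = u].

Lemma max_at_eq_on e C C' u : {in e, C =1 C'} -> max_at e C u -> max_at e C' u.
Proof.
move=> eqC [ue C_le C_uniq]; split=> // w we; rewrite -!eqC //; first exact: C_le.
exact: C_uniq.
Qed.

Lemma max_at_bigmax e C u : max_at e C u -> C u = \max_(w in e) C w.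
Proof.
case=> ue C_le _; apply/eqP; rewrite eqn_leq (leq_bigmax_cond u ue).
exact/bigmax_leqP.
Qed.

Lemma max_at_extend e v C u : v \in e -> C v < C u -> max_at (e :\ v) C u -> max_at e C u.
Proof.
move=> ve lt_vu [/setD1P[_ ue] C_le C_uniq]; split=> // w we.
  by have [->|wv] := eqVneq w v; [exact: ltnW | apply: C_le; rewrite !inE wv].
have [-> Cvu|wv] := eqVneq w v; first by rewrite Cvu ltnn in lt_vu.
by apply: C_uniq; rewrite !inE wv.
Qed.

Lemma max_at_top e v C : v \in e -> {in e :\ v, forall w, C w < C v} -> max_at e C v.
Proof.
move=> ve lt_v; split=> // w we; have [-> //|wv] := eqVneq w v.
  by apply/ltnW/lt_v; rewrite !inE wv.
by move=> Cwv; have := lt_v w; rewrite !inE wv Cwv ltnn => /(_ we).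
Qed.

Definition star E v := [set e in E | v \in e].

Lemma in_star E v e : (e \in star E v) = (e \in E) && (v \in e).
Proof. by rewrite inE. Qed.

Definition del_vertex E v := [set e :\ v | e in E] :\ set0.

Definition del_star E v := E :\: star E v.

Lemma hdeg_del_vertex E v w : hdeg (del_vertex E v) w <= hdeg E w.
Proof.
apply: leq_trans (leq_imset_card (fun e => e :\ v) _); apply/subset_leq_card/subsetP.
move=> e' /setIdP[/setD1P[_ /imsetP[e eE ->]] /setD1P[_ we]].
by apply/imsetP; exists e; rewrite ?inE ?eE.
Qed.

Lemma card_del_vertex E v : #|del_vertex E v| <= #|E|.
Proof. exact: leq_trans (subset_leq_card (subD1set _ _)) (leq_imset_card _ _). Qed.

Lemma hdeg_le_card E v : hdeg E v <= #|E|.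
Proof. by apply/subset_leq_card/subsetP => e /setIdP[]. Qed.

Lemma card_del_star E v : #|del_star E v| = #|E| - hdeg E v.
Proof. by rewrite cardsD (setIidPr _) //; apply/subsetP => e /setIdP[]. Qed.

Lemma sH_del_star E v : sH E <= hdeg E v -> sH (del_star E v) < sH E.
Proof.
move=> s_le; rewrite /sH card_del_star s_of_subn //.
exact: leq_trans (leq_trans _ s_le) (hdeg_le_card E v).
Qed.

Lemma unique_max_del_vertex E v C c : hypergraph E ->
  unique_max (del_vertex E v) C ->
  c \notin [seq \max_(w in e :\ v) C w | e <- enum (star E v)] ->
  unique_max E [eta C with v |-> c].
Proof.
move=> hE umax c_notin e eE.
have agree e' : v \notin e' -> {in e', C =1 [eta C with v |-> c]}.
  by move=> ve' w we' /=; case: eqP => // wv; rewrite -wv we' in ve'.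
have [ve | ve] := boolP (v \in e); last first.
  have e_del : e \in del_vertex E v.
    rewrite in_setD1 hE //=; apply/imsetP; exists e => //.
    by apply/setP => w; rewrite in_setD1; case: eqVneq => // ->; rewrite (negbTE ve).
  by have [u] := umax e e_del; exists u; apply: max_at_eq_on (agree _ ve) _.
have [e0 | en0] := eqVneq (e :\ v) set0.
  by exists v; apply: max_at_top => // w; rewrite e0 inE.
have [u umax_u] : exists u, max_at (e :\ v) C u.
  by apply: umax; rewrite !inE en0; apply/imsetP; exists e.
have umax_u' := max_at_eq_on (agree _ (negbT (setD11 v e))) umax_u.
have cu : c != C u.
  apply: contraNneq c_notin => ->; apply/mapP; exists e; last exact: max_at_bigmax.
  by rewrite mem_enum inE eE.
have [lt_cu | le_uc] := ltnP c (C u).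
  have uv : u != v by case: umax_u => /setD1P[].
  by exists u; apply: (max_at_extend ve _ umax_u'); rewrite /= eqxx (negbTE uv).
exists v; apply: max_at_top => // w w_e; have /setD1P[wv _] := w_e.
case: umax_u => _ C_le _; rewrite /= eqxx (negbTE wv).
by apply: leq_ltn_trans (C_le w w_e) _; rewrite ltn_neqAle eq_sym cu.
Qed.

Lemma unique_max_del_star E v C M :
  unique_max (del_star E v) C ->
  (forall e w, e \in star E v -> w \in e :\ v -> C w < M) ->
  unique_max E [eta C with v |-> M].
Proof.
move=> umax lt_M e eE; have [ve | ve] := boolP (v \in e).
  exists v; apply: max_at_top => // w w_e; rewrite /= eqxx.
  by case/setD1P: (w_e) => /negbTE-> _; apply: (lt_M e); rewrite ?in_star ?eE.
have [u umax_u] : exists u, max_at e C u by apply: umax; rewrite in_setD in_star eE ve.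
exists u; apply: max_at_eq_on umax_u => w we /=.
by case: eqP => // wv; rewrite -wv we in ve.
Qed.

Definition admissible_lists U E (Ls : V -> seq nat) :=
  {in U, forall v, uniq (Ls v) /\ minn (hdeg E v).+1 (sH E) <= size (Ls v)}.

Definition list_colorable U E (Ls : V -> seq nat) :=
  exists C, {in U, forall v, C v \in Ls v} /\ unique_max E C.

Definition list_choosable U := forall E Ls,
  hypergraph E -> {in E, forall e, e \subset U} -> admissible_lists U E Ls ->
  list_colorable U E Ls.

Lemma list_choosable0 : list_choosable set0.
Proof.
move=> E Ls hE E0 _; exists (fun=> 0); split=> [v|e eE]; first by rewrite inE.
by have := hE e eE; rewrite -subset0 E0.
Qed.

Lemma list_colorable_low_degree U E Ls v :
  list_choosable (U :\ v) -> hypergraph E -> {in E, forall e, e \subset U} ->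
  admissible_lists U E Ls -> v \in U -> (hdeg E v).+1 <= sH E ->
  list_colorable U E Ls.
Proof.
move=> choose hE EU adm vU low.
have [C [CL umax]] : list_colorable (U :\ v) (del_vertex E v) Ls.
  apply: choose => [e /setD1P[] | e /setD1P[_ /imsetP[e0 e0E ->]] | w /setD1P[_ wU]] //.
    exact/setSD/EU.
  have [Ls_uniq Ls_size] := adm w wU; split=> //; apply: leq_trans Ls_size.
  rewrite leq_min !geq_min ltnS hdeg_del_vertex /=.
  by rewrite /sH (s_of_mono (card_del_vertex E v)) orbT.
have [Ls_uniq Ls_size] := adm v vU; rewrite (minn_idPl low) in Ls_size.
have [c cL c_notin] :
    exists2 c, c \in Ls v & c \notin [seq \max_(w in e :\ v) C w | e <- enum (star E v)].
  by apply: exists_notin_uniq Ls_uniq _; rewrite size_map -cardE.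
exists [eta C with v |-> c]; split; last exact: unique_max_del_vertex.
by move=> w wU /=; case: eqP => [-> // | /eqP wv]; apply: CL; rewrite !inE wv.
Qed.

Lemma list_colorable_high_degree U E Ls :
  (forall v, v \in U -> list_choosable (U :\ v)) -> U != set0 -> hypergraph E ->
  {in E, forall e, e \subset U} -> admissible_lists U E Ls ->
  {in U, forall v, sH E <= hdeg E v} -> list_colorable U E Ls.
Proof.
move=> choose Un0 hE EU adm high.
have Ls_size w : w \in U -> sH E <= size (Ls w).
  by move=> wU; case: (adm w wU) => _; rewrite (minn_idPr _) // ltnW // ltnS high.
have U_gt0 : 0 < #|U| by rewrite card_gt0.
have [v vU M_def] := eq_bigmax_cond (fun w => \max_(x <- Ls w) x) U_gt0.
set M := \max_(x <- _) x in M_def.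
have le_M w x : w \in U -> x \in Ls w -> x <= M.
  move=> wU xL; apply: leq_trans (leq_bigmax_seq _ xL isT) _.
  by rewrite -M_def (leq_bigmax_cond (P := mem U)).
have [C [CL umax]] : list_colorable (U :\ v) (del_star E v) (fun w => rem M (Ls w)).
  apply: choose => // [e /setDP[eE _] | e /setDP[eE ve] | w /setD1P[_ wU]].
  - exact: hE.
  - apply/subsetP => w we; rewrite !inE (subsetP (EU e eE)) // andbT.
    by apply: contraNneq ve => <-; rewrite in_star eE.
  - have [Ls_uniq _] := adm w wU; split; first exact: rem_uniq.
    apply: leq_trans (geq_minr _ _) (leq_trans _ (size_rem_geq M _)).
    by move: (leq_trans (sH_del_star (high v vU)) (Ls_size w wU)); case: (size _).
have C_lt w : w \in U :\ v -> C w < M /\ C w \in Ls w.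
  move=> w_U; have /setD1P[_ wU] := w_U; have [Ls_uniq _] := adm w wU.
  move: (CL w w_U); rewrite mem_rem_uniq // => /andP[/= CM CLw].
  by rewrite ltn_neqAle CM (le_M w).
exists [eta C with v |-> M]; split.
  move=> w wU /=; case: eqP => [-> | /eqP wv]; last by case: (C_lt w); rewrite ?inE ?wv.
  rewrite bigmax_seq_mem // -size_eq0 -lt0n; exact: leq_trans (Ls_size v vU).
apply: unique_max_del_star umax _ => e w /setIdP[eE _] /setD1P[wv we].
by case: (C_lt w); rewrite // !inE wv (subsetP (EU e eE)).
Qed.

Lemma list_choosable_all U : list_choosable U.
Proof.
elim: {U}#|U| {-2}U (eqxx #|U|) => [|n IH] U /eqP cardU.
  by move/cards0_eq: cardU => ->; exact: list_choosable0.
have choose v : v \in U -> list_choosable (U :\ v).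
  by move=> vU; apply: IH; move: cardU; rewrite (cardsD1 v U) vU add1n => -[->].
move=> E Ls hE EU adm.
have [/exists_inP[v vU low] | /exists_inPn all_high] :=
  boolP [exists v in U, (hdeg E v).+1 <= sH E].
  exact: list_colorable_low_degree (choose v vU) hE EU adm vU low.
apply: list_colorable_high_degree => // [|v vU]; first by rewrite -card_gt0 cardU.
by rewrite leqNgt all_high.
Qed.

End UniqueMaximum.

Theorem theorem5p3 (V : finType) (E : {set {set V}}) (L : V -> nat -> Prop)
  (hH : hypergraph E)
  (hpos : forall v x, L v x -> 0 < x)
  (hL : forall v, card_ge (L v) (minn (hdeg E v).+1 (sH E))) :
  exists C : V -> nat,
    (forall v, 0 < C v) /\ (forall v, L v (C v)) /\ unique_max E C.
Proof.
have [Ls Ls_spec] := fin_all_exists hL.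
have [C [CL umax]] : list_colorable [set: V] E Ls.
  by apply: list_choosable_all => // v _; have [Ls_uniq [-> _]] := Ls_spec v.
have C_L v : L v (C v) by case: (Ls_spec v) => _ [_]; apply; apply: CL.
by exists C; split => // v; apply: hpos (C_L v).
Qed.
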